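(* For $n\ge0$ define $$\mathbb{P}_\infty^{(n)}:=\int_0^\infty\left[1-\Gamma\!\left(\frac{1}{2(1-\beta)},\frac{x_0^{2(1-\beta)}}{2r(1-\beta)^2}\right)\right]\frac{y_0}{\nu r^{3/2}\sqrt{2\pi}}\sum_{k=0}^n\frac{1}{k!}\left(-\frac{y_0^2}{2\nu^2r}\right)^k\mathrm{d}r,$$ and $$b_n:=\frac{2y_0(1-\beta)}{\Gamma\!\left(\frac{1}{2(1-\beta)}\right)\nu\sqrt{\pi}x_0^{1-\beta}}\left(\frac{y_0^2(1-\beta)^2}{\nu^2x_0^{2(1-\beta)}}\right)^n\frac{\Gamma\!\left(n+1+\frac{\beta}{2-2\beta}\right)}{n!(1+2n)}.$$ Then these integrals are finite, $\mathbb{P}_\infty^{(n)}=\sum_{k=0}^n(-1)^kb_k$, and $|\mathbb{P}_\infty-\mathbb{P}_\infty^{(n)}|\le b_{n+1}$ for every $n\ge0$. In particular $$\mathbb{P}_\infty^{(0)}=\frac{2\Gamma\!\left(1+\frac{\beta}{2-2\beta}\right)}{\Gamma\!\left(\frac{1}{2-2\beta}\right)}\frac{y_0(1-\beta)}{\nu\sqrt{\pi}x_0^{1-\beta}}.$$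
   Context: Parameters $x_0,y_0,\nu>0$, $\beta\in[0,1)$. $\Gamma(v,x):=\Gamma(v)^{-1}\int_0^xu^{v-1}e^{-u}\,\mathrm{d}u$ is the normalised lower incomplete Gamma function, $\Gamma(\cdot)$ the Euler Gamma function. $\mathbb{P}_\infty:=\frac{y_0}{\nu\sqrt{2\pi}}\int_0^\infty\left[1-\Gamma\!\left(\frac{1}{2(1-\beta)},\frac{x_0^{2(1-\beta)}}{2r(1-\beta)^2}\right)\right]r^{-3/2}\exp\!\left(-\frac{y_0^2}{2\nu^2r}\right)\mathrm{d}r$, which equals the large-time limit $\lim_{t\to\infty}\mathbb{P}(X_t=0)$ of the mass at zero in the uncorrelated SABR model $\mathrm{d}X_t=Y_tX_t^\beta\mathrm{d}W_t$, $\mathrm{d}Y_t=\nu Y_t\mathrm{d}Z_t$ ($W,Z$ independent, origin absorbing). *)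

From Stdlib Require Import Arith Reals Lra ClassicalEpsilon.
Open Scope R_scope.

Definition improper_integral_0_inf (f : R -> R) (l : R) : Prop :=
  (forall a b, 0 < a -> a <= b -> inhabited (Riemann_integrable f a b)) /\
  (forall eps, 0 < eps -> exists delta, 0 < delta /\ exists M,
     forall a b (pr : Riemann_integrable f a b),
       0 < a -> a < delta -> M < b -> a <= b -> Rabs (RiemannInt pr - l) < eps).

Definition improper_integral_0_x (f : R -> R) (x l : R) : Prop :=
  (forall a, 0 < a -> a <= x -> inhabited (Riemann_integrable f a x)) /\
  (forall eps, 0 < eps -> exists delta, 0 < delta /\
     forall a (pr : Riemann_integrable f a x),
       0 < a -> a < delta -> a <= x -> Rabs (RiemannInt pr - l) < eps).

(* The value of a (convergent) improper integral; limits are unique, so this is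
   the integral whenever it converges. *)
Definition Int_0_inf (f : R -> R) : R :=
  epsilon (inhabits 0) (fun l => improper_integral_0_inf f l).
Definition Int_0_x (f : R -> R) (x : R) : R :=
  epsilon (inhabits 0) (fun l => improper_integral_0_x f x l).

Definition Gamma (v : R) : R :=
  Int_0_inf (fun u => Rpower u (v - 1) * exp (- u)).

Definition Gamma_inc (v x : R) : R :=
  / Gamma v * Int_0_x (fun u => Rpower u (v - 1) * exp (- u)) x.

Definition tail_factor (x0 beta r : R) : R :=
  1 - Gamma_inc (1 / (2 * (1 - beta)))
        (Rpower x0 (2 * (1 - beta)) / (2 * r * (1 - beta) ^ 2)).

Definition P_inf_integrand (x0 y0 nu beta : R) (r : R) : R :=
  y0 / (nu * sqrt (2 * PI)) * tail_factor x0 beta r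
  * Rpower r (- (3 / 2)) * exp (- (y0 ^ 2 / (2 * nu ^ 2 * r))).

Definition P_inf (x0 y0 nu beta : R) : R :=
  Int_0_inf (P_inf_integrand x0 y0 nu beta).

Definition P_n_integrand (x0 y0 nu beta : R) (n : nat) (r : R) : R :=
  tail_factor x0 beta r * (y0 / (nu * Rpower r (3 / 2) * sqrt (2 * PI)))
  * sum_f_R0 (fun k => / INR (fact k) * (- (y0 ^ 2 / (2 * nu ^ 2 * r))) ^ k) n.

Definition P_n (x0 y0 nu beta : R) (n : nat) : R :=
  Int_0_inf (P_n_integrand x0 y0 nu beta n).

Definition b_coef (x0 y0 nu beta : R) (n : nat) : R :=
  2 * y0 * (1 - beta)
  / (Gamma (1 / (2 * (1 - beta))) * nu * sqrt PI * Rpower x0 (1 - beta))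
  * (y0 ^ 2 * (1 - beta) ^ 2 / (nu ^ 2 * Rpower x0 (2 * (1 - beta)))) ^ n
  * (Gamma (INR n + 1 + beta / (2 - 2 * beta)) / (INR (fact n) * (1 + 2 * INR n))).

(* Put v = 1/(2(1-beta)), c = x0^(2(1-beta))/(2(1-beta)^2) and
   T(r) = 1 - Gamma(v, c/r).  Expanding exp(-y0^2/(2 nu^2 r)) to order n turns
   P_inf^(n) into a combination of the moments int_0^oo T(r) r^(-m-1) dr with
   m = k + 1/2.  Integrating by parts and substituting u = c/r, such a moment
   equals c^(-m) Gamma(v+m) / (m Gamma(v)), and these values are exactly the
   b_k.  The Lagrange remainder of exp(-y) is at most y^(n+1)/(n+1)!, so
   |P_inf - P_inf^(n)| is at most the integral of the next term, b_(n+1). *)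

From Stdlib Require Import Arith Reals Lra ClassicalEpsilon.
From Coquelicot Require Import Coquelicot.
Open Scope R_scope.

(** * Limits at 0+ and at +oo *)

Lemma filterlim_at_right_0_iff (f : R -> R) (L : R) :
  filterlim f (at_right 0) (locally L) <->
  forall eps, 0 < eps -> exists d, 0 < d /\
    forall x, 0 < x -> x < d -> Rabs (f x - L) < eps.
Proof.
  rewrite filterlim_locally. split.
  - intros H eps He. destruct (H (mkposreal eps He)) as [d Hd].
    exists d. split; [apply cond_pos|]. intros x H1 H2. apply (Hd x); [|exact H1].
    change (Rabs (x - 0) < d). apply Rabs_def1; lra.
  - intros H eps. destruct (H eps (cond_pos eps)) as [d [Hd H1]].
    exists (mkposreal d Hd). intros y Hy Hy0. apply H1; [exact Hy0|].
    change (Rabs (y - 0) < d) in Hy. apply Rabs_def2 in Hy. lra.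
Qed.

Lemma filterlim_p_infty_iff (f : R -> R) (L : R) :
  filterlim f (Rbar_locally p_infty) (locally L) <->
  forall eps, 0 < eps -> exists M, forall x, M < x -> Rabs (f x - L) < eps.
Proof.
  rewrite filterlim_locally. split.
  - intros H eps He. exact (H (mkposreal eps He)).
  - intros H eps. exact (H eps (cond_pos eps)).
Qed.

Section Limits.
Context {T : Type} {F : (T -> Prop) -> Prop} {FF : Filter F}.

Lemma filterlim_Rplus (f g : T -> R) a b :
  filterlim f F (locally a) -> filterlim g F (locally b) ->
  filterlim (fun x => f x + g x) F (locally (a + b)).
Proof. intros Hf Hg. exact (filterlim_comp_2 f g Rplus Hf Hg (filterlim_plus a b)). Qed.

Lemma filterlim_Rmult (f g : T -> R) a b :
  filterlim f F (locally a) -> filterlim g F (locally b) ->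
  filterlim (fun x => f x * g x) F (locally (a * b)).
Proof. intros Hf Hg. exact (filterlim_comp_2 f g Rmult Hf Hg (filterlim_mult a b)). Qed.

Lemma filterlim_Rmult_l (f : T -> R) k a :
  filterlim f F (locally a) -> filterlim (fun x => k * f x) F (locally (k * a)).
Proof. intros. apply filterlim_Rmult; [apply filterlim_const | assumption]. Qed.

Lemma filterlim_Rminus (f g : T -> R) a b :
  filterlim f F (locally a) -> filterlim g F (locally b) ->
  filterlim (fun x => f x - g x) F (locally (a - b)).
Proof.
  intros Hf Hg. apply filterlim_Rplus; [exact Hf|].
  replace (- b) with ((-1) * b) by ring.
  apply (filterlim_ext (fun x => (-1) * g x)); [intros; ring|].
  now apply filterlim_Rmult_l.
Qed.

End Limits.

Lemma filterlim_comp_div_at_right_0 c (f : R -> R) (L : R) : 0 < c ->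
  filterlim f (Rbar_locally p_infty) (locally L) ->
  filterlim (fun r => f (c / r)) (at_right 0) (locally L).
Proof.
  intros Hc H. rewrite filterlim_p_infty_iff in H. apply filterlim_at_right_0_iff.
  intros eps He. destruct (H eps He) as [M HM].
  assert (Hm : 0 < Rabs M + 1) by (pose proof (Rabs_pos M); lra).
  exists (c / (Rabs M + 1)). split; [apply Rdiv_lt_0_compat; assumption|].
  intros x Hx Hxd. apply HM.
  apply Rle_lt_trans with (Rabs M); [apply Rle_abs|].
  apply Rlt_le_trans with (Rabs M + 1); [lra|].
  apply Rmult_le_reg_r with x; [exact Hx|].
  replace (c / x * x) with c by (field; lra).
  apply Rmult_lt_compat_r with (r := Rabs M + 1) in Hxd; [|exact Hm].
  replace (c / (Rabs M + 1) * (Rabs M + 1)) with c in Hxd by (field; lra).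
  lra.
Qed.

Lemma filterlim_comp_div_p_infty c (f : R -> R) (L : R) : 0 < c ->
  filterlim f (at_right 0) (locally L) ->
  filterlim (fun r => f (c / r)) (Rbar_locally p_infty) (locally L).
Proof.
  intros Hc H. rewrite filterlim_at_right_0_iff in H. apply filterlim_p_infty_iff.
  intros eps He. destruct (H eps He) as [d [Hd Hx]]. exists (c / d). intros x Hxd.
  assert (0 < c / d) by (apply Rdiv_lt_0_compat; assumption).
  apply Hx; [apply Rdiv_lt_0_compat; lra|].
  apply Rmult_lt_reg_r with x; [lra|]. replace (c / x * x) with c by (field; lra).
  replace c with (c / d * d) at 1 by (field; lra). nra.
Qed.

Lemma nondecreasing_bounded_lim_p_infty (F : R -> R) U :
  (forall x y, 0 < x -> x <= y -> F x <= F y) -> (forall x, 0 < x -> F x <= U) ->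
  exists L, filterlim F (Rbar_locally p_infty) (locally L).
Proof.
  intros Hm HU.
  destruct (completeness (fun z => exists x, 0 < x /\ z = F x)) as [L [Hub Hlub]].
  { exists U. intros z [x [Hx ->]]. auto. }
  { exists (F 1), 1. split; [lra | reflexivity]. }
  exists L. apply filterlim_p_infty_iff. intros eps He.
  assert (exists x0, 0 < x0 /\ L - eps < F x0) as [x0 [Hx0 Hlt]].
  { apply Classical_Prop.NNPP. intros Hn. enough (L <= L - eps) by lra.
    apply Hlub. intros z [x [Hx ->]]. apply Rnot_lt_le. intros Hc. apply Hn. eauto. }
  exists x0. intros x Hx.
  assert (F x0 <= F x) by (apply Hm; lra).
  assert (F x <= L) by (apply Hub; exists x; split; [lra | reflexivity]).
  apply Rabs_def1; lra.
Qed.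

Lemma nondecreasing_bounded_lim_at_right_0 (F : R -> R) D :
  (forall x y, 0 < x -> x <= y -> F x <= F y) -> (forall x, 0 < x -> D <= F x) ->
  exists L, filterlim F (at_right 0) (locally L).
Proof.
  intros Hm HD.
  destruct (completeness (fun z => exists x, 0 < x /\ z = - F x)) as [m [Hub Hlub]].
  { exists (- D). intros z [x [Hx ->]]. specialize (HD x Hx). lra. }
  { exists (- F 1), 1. split; [lra | reflexivity]. }
  exists (- m). apply filterlim_at_right_0_iff. intros eps He.
  assert (exists x0, 0 < x0 /\ m - eps < - F x0) as [x0 [Hx0 Hlt]].
  { apply Classical_Prop.NNPP. intros Hn. enough (m <= m - eps) by lra.
    apply Hlub. intros z [x [Hx ->]]. apply Rnot_lt_le. intros Hc. apply Hn. eauto. }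
  exists x0. split; [exact Hx0|]. intros x Hx Hxx.
  assert (F x <= F x0) by (apply Hm; lra).
  assert (- F x <= m) by (apply Hub; exists x; split; [exact Hx | reflexivity]).
  apply Rabs_def1; lra.
Qed.

(** * Improper integrals over (0, +oo) *)

Definition is_improper_RInt (f : R -> R) (l : R) : Prop :=
  (forall a b, 0 < a -> a <= b -> ex_RInt f a b) /\
  (forall eps, 0 < eps -> exists delta, 0 < delta /\ exists M,
     forall a b, 0 < a -> a < delta -> M < b -> a <= b -> Rabs (RInt f a b - l) < eps).

Definition is_improper_RInt_0_x (f : R -> R) (x l : R) : Prop :=
  (forall a, 0 < a -> a <= x -> ex_RInt f a x) /\
  (forall eps, 0 < eps -> exists delta, 0 < delta /\
     forall a, 0 < a -> a < delta -> a <= x -> Rabs (RInt f a x - l) < eps).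

Lemma improper_integral_0_inf_iff f l :
  improper_integral_0_inf f l <-> is_improper_RInt f l.
Proof.
  split.
  - intros [H1 H2]. split.
    + intros a b Ha Hab. destruct (H1 a b Ha Hab) as [pr]. exact (ex_RInt_Reals_1 _ _ _ pr).
    + intros eps He. destruct (H2 eps He) as [d [Hd [M HM]]]. exists d. split; [exact Hd|].
      exists M. intros a b Ha Had HMb Hab. destruct (H1 a b Ha Hab) as [pr].
      rewrite (RInt_Reals f a b pr). auto.
  - intros [H1 H2]. split.
    + intros a b Ha Hab. constructor. apply ex_RInt_Reals_0. auto.
    + intros eps He. destruct (H2 eps He) as [d [Hd [M HM]]]. exists d. split; [exact Hd|].
      exists M. intros a b pr Ha Had HMb Hab. rewrite <- RInt_Reals. auto.
Qed.

Lemma improper_integral_0_x_iff f x l :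
  improper_integral_0_x f x l <-> is_improper_RInt_0_x f x l.
Proof.
  split.
  - intros [H1 H2]. split.
    + intros a Ha Hax. destruct (H1 a Ha Hax) as [pr]. exact (ex_RInt_Reals_1 _ _ _ pr).
    + intros eps He. destruct (H2 eps He) as [d [Hd HM]]. exists d. split; [exact Hd|].
      intros a Ha Had Hax. destruct (H1 a Ha Hax) as [pr].
      rewrite (RInt_Reals f a x pr). auto.
  - intros [H1 H2]. split.
    + intros a Ha Hax. constructor. apply ex_RInt_Reals_0. auto.
    + intros eps He. destruct (H2 eps He) as [d [Hd HM]]. exists d. split; [exact Hd|].
      intros a pr Ha Had Hax. rewrite <- RInt_Reals. auto.
Qed.

Lemma Req_of_Rabs_lt (l l' : R) : (forall eps, 0 < eps -> Rabs (l - l') < eps) -> l = l'.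
Proof.
  intros H. destruct (Req_dec l l') as [|Hn]; [assumption|].
  assert (Hd : 0 < Rabs (l - l')) by (apply Rabs_pos_lt; lra).
  specialize (H _ Hd). lra.
Qed.

Lemma is_improper_RInt_unique f l l' : is_improper_RInt f l -> is_improper_RInt f l' -> l = l'.
Proof.
  intros [_ H] [_ H']. apply Req_of_Rabs_lt. intros eps He.
  destruct (H (eps / 2)) as [d [Hd [M HM]]]; [lra|].
  destruct (H' (eps / 2)) as [d' [Hd' [M' HM']]]; [lra|].
  set (a := Rmin d d' / 2). set (b := Rmax (Rmax M M') a + 1).
  pose proof (Rmin_l d d'); pose proof (Rmin_r d d').
  pose proof (Rmax_l M M'); pose proof (Rmax_r M M').
  pose proof (Rmax_l (Rmax M M') a); pose proof (Rmax_r (Rmax M M') a).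
  assert (Ha : 0 < a) by (unfold a; apply Rmin_case; lra).
  specialize (HM a b Ha ltac:(unfold a; lra) ltac:(unfold b; lra) ltac:(unfold b; lra)).
  specialize (HM' a b Ha ltac:(unfold a; lra) ltac:(unfold b; lra) ltac:(unfold b; lra)).
  apply Rabs_def2 in HM. apply Rabs_def2 in HM'. apply Rabs_def1; lra.
Qed.

Lemma is_improper_RInt_0_x_unique f x l l' : 0 < x ->
  is_improper_RInt_0_x f x l -> is_improper_RInt_0_x f x l' -> l = l'.
Proof.
  intros Hx [_ H] [_ H']. apply Req_of_Rabs_lt. intros eps He.
  destruct (H (eps / 2)) as [d [Hd HM]]; [lra|].
  destruct (H' (eps / 2)) as [d' [Hd' HM']]; [lra|].
  set (a := Rmin (Rmin d d') x / 2).
  pose proof (Rmin_l d d'); pose proof (Rmin_r d d').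
  pose proof (Rmin_l (Rmin d d') x); pose proof (Rmin_r (Rmin d d') x).
  assert (Ha : 0 < a) by (unfold a; repeat apply Rmin_case; lra).
  specialize (HM a Ha ltac:(unfold a; lra) ltac:(unfold a; lra)).
  specialize (HM' a Ha ltac:(unfold a; lra) ltac:(unfold a; lra)).
  apply Rabs_def2 in HM. apply Rabs_def2 in HM'. apply Rabs_def1; lra.
Qed.

Lemma Int_0_inf_correct f l : is_improper_RInt f l -> Int_0_inf f = l.
Proof.
  intros H. unfold Int_0_inf.
  apply (is_improper_RInt_unique f); [|exact H].
  apply improper_integral_0_inf_iff, epsilon_spec.
  exists l. now apply improper_integral_0_inf_iff.
Qed.

Lemma Int_0_x_correct f x l : 0 < x -> is_improper_RInt_0_x f x l -> Int_0_x f x = l.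
Proof.
  intros Hx H. unfold Int_0_x.
  apply (is_improper_RInt_0_x_unique f x); [exact Hx| |exact H].
  apply improper_integral_0_x_iff, epsilon_spec.
  exists l. now apply improper_integral_0_x_iff.
Qed.

Lemma is_improper_RInt_ext f g l : (forall x, 0 < x -> f x = g x) ->
  is_improper_RInt f l -> is_improper_RInt g l.
Proof.
  intros E [H1 H2]. split.
  - intros a b Ha Hab. apply ex_RInt_ext with f; [|auto].
    intros x Hx. rewrite Rmin_left in Hx by lra. apply E; lra.
  - intros eps He. destruct (H2 eps He) as [d [Hd [M HM]]]. exists d. split; [exact Hd|].
    exists M. intros a b Ha Had HMb Hab. rewrite <- (RInt_ext f); [auto|].
    intros x Hx. rewrite Rmin_left in Hx by lra. apply E; lra.
Qed.

Lemma is_improper_RInt_plus f g l l' : is_improper_RInt f l -> is_improper_RInt g l' ->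
  is_improper_RInt (fun x => f x + g x) (l + l').
Proof.
  intros [H1 H2] [H1' H2']. split.
  - intros a b Ha Hab. apply (ex_RInt_plus f g); auto.
  - intros eps He. destruct (H2 (eps / 2)) as [d [Hd [M HM]]]; [lra|].
    destruct (H2' (eps / 2)) as [d' [Hd' [M' HM']]]; [lra|].
    exists (Rmin d d'). split; [apply Rmin_case; lra|]. exists (Rmax M M').
    intros a b Ha Had HMb Hab.
    pose proof (Rmin_l d d'); pose proof (Rmin_r d d').
    pose proof (Rmax_l M M'); pose proof (Rmax_r M M').
    rewrite (RInt_plus f g) by auto.
    specialize (HM a b Ha ltac:(lra) ltac:(lra) Hab).
    specialize (HM' a b Ha ltac:(lra) ltac:(lra) Hab).
    change (plus (RInt f a b) (RInt g a b)) with (RInt f a b + RInt g a b).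
    apply Rabs_def2 in HM. apply Rabs_def2 in HM'. apply Rabs_def1; lra.
Qed.

Lemma is_improper_RInt_scal f k l : is_improper_RInt f l ->
  is_improper_RInt (fun x => k * f x) (k * l).
Proof.
  intros [H1 H2]. assert (Hk : 0 < Rabs k + 1) by (pose proof (Rabs_pos k); lra).
  split.
  - intros a b Ha Hab. apply (ex_RInt_scal f); auto.
  - intros eps He. destruct (H2 (eps / (Rabs k + 1))) as [d [Hd [M HM]]].
    { apply Rdiv_lt_0_compat; assumption. }
    exists d. split; [exact Hd|]. exists M. intros a b Ha Had HMb Hab.
    rewrite (RInt_scal f) by auto. change (scal k (RInt f a b)) with (k * RInt f a b).
    specialize (HM a b Ha Had HMb Hab).
    replace (k * RInt f a b - k * l) with (k * (RInt f a b - l)) by ring.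
    rewrite Rabs_mult.
    apply Rmult_lt_compat_l with (r := Rabs k + 1) in HM; [|exact Hk].
    replace ((Rabs k + 1) * (eps / (Rabs k + 1))) with eps in HM by (field; lra).
    pose proof (Rabs_pos (RInt f a b - l)). nra.
Qed.

Lemma is_improper_RInt_sum (f : nat -> R -> R) (l : nat -> R) n :
  (forall k, is_improper_RInt (f k) (l k)) ->
  is_improper_RInt (fun r => sum_f_R0 (fun k => f k r) n) (sum_f_R0 l n).
Proof.
  intros H. induction n as [|n IH]; [apply H|].
  apply is_improper_RInt_plus; [exact IH | apply H].
Qed.

Lemma is_improper_RInt_Rabs_le f1 f2 g l1 l2 l :
  is_improper_RInt f1 l1 -> is_improper_RInt f2 l2 -> is_improper_RInt g l ->
  (forall x, 0 < x -> Rabs (f1 x - f2 x) <= g x) -> Rabs (l1 - l2) <= l.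
Proof.
  intros [A1 B1] [A2 B2] [A3 B3] Hle.
  apply Rnot_lt_le. intros Hlt. set (eps := (Rabs (l1 - l2) - l) / 4).
  assert (He : 0 < eps) by (unfold eps; lra).
  destruct (B1 eps He) as [d1 [Hd1 [M1 HM1]]].
  destruct (B2 eps He) as [d2 [Hd2 [M2 HM2]]].
  destruct (B3 eps He) as [d3 [Hd3 [M3 HM3]]].
  set (a := Rmin d1 (Rmin d2 d3) / 2). set (b := Rmax M1 (Rmax M2 (Rmax M3 a)) + 1).
  pose proof (Rmin_l d1 (Rmin d2 d3)); pose proof (Rmin_r d1 (Rmin d2 d3)).
  pose proof (Rmin_l d2 d3); pose proof (Rmin_r d2 d3).
  pose proof (Rmax_l M1 (Rmax M2 (Rmax M3 a))); pose proof (Rmax_r M1 (Rmax M2 (Rmax M3 a))).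
  pose proof (Rmax_l M2 (Rmax M3 a)); pose proof (Rmax_r M2 (Rmax M3 a)).
  pose proof (Rmax_l M3 a); pose proof (Rmax_r M3 a).
  assert (Ha : 0 < a) by (unfold a; repeat apply Rmin_case; lra).
  assert (Hab : a <= b) by (unfold b; lra).
  specialize (HM1 a b Ha ltac:(unfold a; lra) ltac:(unfold b; lra) Hab).
  specialize (HM2 a b Ha ltac:(unfold a; lra) ltac:(unfold b; lra) Hab).
  specialize (HM3 a b Ha ltac:(unfold a; lra) ltac:(unfold b; lra) Hab).
  assert (Hm : Rabs (RInt f1 a b - RInt f2 a b) <= RInt g a b).
  { rewrite <- (RInt_minus f1 f2) by auto.
    eapply Rle_trans; [apply abs_RInt_le; [exact Hab | apply (ex_RInt_minus f1 f2); auto]|].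
    apply RInt_le; [exact Hab | apply ex_RInt_norm, (ex_RInt_minus f1 f2); auto | auto |].
    intros x Hx. apply Hle. lra. }
  apply Rabs_def2 in HM1. apply Rabs_def2 in HM2. apply Rabs_def2 in HM3.
  apply Rabs_le_between in Hm. unfold eps in *.
  destruct (Rcase_abs (l1 - l2));
    [rewrite Rabs_left in * by lra | rewrite Rabs_right in * by lra]; lra.
Qed.

Lemma RInt_le_improper f l : is_improper_RInt f l -> (forall x, 0 < x -> 0 <= f x) ->
  forall a b, 0 < a -> a <= b -> RInt f a b <= l.
Proof.
  intros [H1 H2] Hpos a b Ha Hab. apply Rnot_lt_le. intros Hlt.
  destruct (H2 (RInt f a b - l)) as [d [Hd [M HM]]]; [lra|].
  set (a' := Rmin a (d / 2)). set (b' := Rmax b (M + 1)).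
  assert (Ha' : 0 < a') by (unfold a'; apply Rmin_case; lra).
  pose proof (Rmin_l a (d / 2)); pose proof (Rmin_r a (d / 2)).
  pose proof (Rmax_l b (M + 1)); pose proof (Rmax_r b (M + 1)).
  specialize (HM a' b' Ha' ltac:(unfold a'; lra) ltac:(unfold b'; lra) ltac:(unfold a', b'; lra)).
  assert (E : RInt f a' b' = RInt f a' a + RInt f a b + RInt f b b').
  { rewrite <- (RInt_Chasles f a' a b') by (apply H1; unfold a', b' in *; lra).
    rewrite <- (RInt_Chasles f a b b') by (apply H1; unfold b' in *; lra).
    change (RInt f a' a + (RInt f a b + RInt f b b') = RInt f a' a + RInt f a b + RInt f b b').
    ring. }
  assert (0 <= RInt f a' a).
  { apply RInt_ge_0; [unfold a' in *; lra | apply H1; unfold a' in *; lra | intros; apply Hpos; lra]. }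
  assert (0 <= RInt f b b').
  { apply RInt_ge_0; [unfold b' in *; lra | apply H1; unfold b' in *; lra | intros; apply Hpos; lra]. }
  apply Rabs_def2 in HM. lra.
Qed.

Lemma ex_RInt_continuous_pos (f : R -> R) a b : 0 < a -> 0 < b ->
  (forall s, 0 < s -> continuous f s) -> ex_RInt f a b.
Proof.
  intros Ha Hb H. apply (ex_RInt_continuous (V := R_CompleteNormedModule)).
  intros z [Hz _]. apply H. eapply Rlt_le_trans; [|exact Hz]. apply Rmin_case; assumption.
Qed.

Lemma RInt_derive_pos (f F : R -> R) a b : 0 < a -> a <= b ->
  (forall x, 0 < x -> is_derive F x (f x)) -> (forall x, 0 < x -> continuous f x) ->
  RInt f a b = F b - F a.
Proof.
  intros Ha Hab HD HC. apply is_RInt_unique.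
  apply (is_RInt_derive F f a b); intros x Hx;
    rewrite Rmin_left, Rmax_right in Hx by lra; [apply HD | apply HC]; lra.
Qed.

Lemma is_improper_RInt_derive (f F : R -> R) L0 L1 :
  (forall x, 0 < x -> is_derive F x (f x)) -> (forall x, 0 < x -> continuous f x) ->
  filterlim F (at_right 0) (locally L0) -> filterlim F (Rbar_locally p_infty) (locally L1) ->
  is_improper_RInt f (L1 - L0).
Proof.
  intros HD HC H0 H1.
  rewrite filterlim_at_right_0_iff in H0. rewrite filterlim_p_infty_iff in H1. split.
  - intros a b Ha Hab. apply ex_RInt_continuous_pos; auto; lra.
  - intros eps He. destruct (H0 (eps / 2)) as [d [Hd Hd']]; [lra|].
    destruct (H1 (eps / 2)) as [M HM]; [lra|].
    exists d. split; [exact Hd|]. exists M. intros a b Ha Had HMb Hab.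
    rewrite (RInt_derive_pos f F a b Ha Hab HD HC).
    specialize (Hd' a Ha Had). specialize (HM b HMb).
    apply Rabs_def2 in Hd'. apply Rabs_def2 in HM. apply Rabs_def1; lra.
Qed.

Lemma is_improper_RInt_0_x_derive (f F : R -> R) L0 x : 0 < x ->
  (forall x, 0 < x -> is_derive F x (f x)) -> (forall x, 0 < x -> continuous f x) ->
  filterlim F (at_right 0) (locally L0) -> is_improper_RInt_0_x f x (F x - L0).
Proof.
  intros Hx HD HC H0. rewrite filterlim_at_right_0_iff in H0. split.
  - intros a Ha Hax. apply ex_RInt_continuous_pos; auto; lra.
  - intros eps He. destruct (H0 eps He) as [d [Hd Hd']].
    exists d. split; [exact Hd|]. intros a Ha Had Hax.
    rewrite (RInt_derive_pos f F a x Ha Hax HD HC).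
    specialize (Hd' a Ha Had). apply Rabs_def2 in Hd'. apply Rabs_def1; lra.
Qed.

Section PrimitiveFrom1.
Variable f : R -> R.
Hypothesis f_cont : forall s, 0 < s -> continuous f s.

Lemma RInt_from_1_derive x : 0 < x -> is_derive (fun x => RInt f 1 x) x (f x).
Proof.
  intros Hx. apply (is_derive_RInt (V := R_CompleteNormedModule) f _ 1 x); [|auto].
  exists (mkposreal (x / 2) ltac:(lra)). intros y Hy.
  change (Rabs (y - x) < x / 2) in Hy. apply Rabs_def2 in Hy.
  apply RInt_correct, ex_RInt_continuous_pos; auto; lra.
Qed.

Lemma RInt_from_1_sub x y : 0 < x -> 0 < y -> RInt f 1 y - RInt f 1 x = RInt f x y.
Proof.
  intros Hx Hy.
  rewrite <- (RInt_Chasles f 1 x y) by (apply ex_RInt_continuous_pos; auto; lra).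
  change (RInt f 1 x + RInt f x y - RInt f 1 x = RInt f x y). ring.
Qed.

Lemma RInt_from_1_nondecreasing : (forall s, 0 < s -> 0 <= f s) ->
  forall x y, 0 < x -> x <= y -> RInt f 1 x <= RInt f 1 y.
Proof.
  intros Hpos x y Hx Hxy.
  assert (0 <= RInt f x y).
  { apply RInt_ge_0; [exact Hxy | apply ex_RInt_continuous_pos; auto; lra |].
    intros t Ht. apply Hpos. lra. }
  rewrite <- RInt_from_1_sub in H by lra. lra.
Qed.

End PrimitiveFrom1.

Lemma is_improper_RInt_le_ex (f g : R -> R) l : (forall x, 0 < x -> continuous f x) ->
  (forall x, 0 < x -> 0 <= f x <= g x) -> is_improper_RInt g l ->
  exists l', is_improper_RInt f l'.
Proof.
  intros Hc Hfg Hg.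
  assert (Hle : forall a b, 0 < a -> a <= b -> RInt f a b <= l).
  { intros a b Ha Hab. apply Rle_trans with (RInt g a b).
    - apply RInt_le; [exact Hab | apply ex_RInt_continuous_pos; auto; lra | apply Hg; auto |].
      intros t Ht. apply Hfg. lra.
    - apply (RInt_le_improper g); auto. intros x Hx. specialize (Hfg x Hx). lra. }
  assert (Hl : 0 <= l).
  { pose proof (Hle 1 1 ltac:(lra) ltac:(lra)) as H. rewrite RInt_point in H. exact H. }
  set (F := fun x => RInt f 1 x).
  assert (HF1 : F 1 = 0) by (unfold F; rewrite RInt_point; reflexivity).
  assert (Hm : forall x y, 0 < x -> x <= y -> F x <= F y).
  { apply RInt_from_1_nondecreasing; [exact Hc|]. intros s Hs. apply Hfg, Hs. }
  assert (HU : forall x, 0 < x -> F x <= l).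
  { intros x Hx. destruct (Rle_lt_dec 1 x).
    - apply Hle; lra.
    - pose proof (Hm x 1 Hx ltac:(lra)). lra. }
  assert (HD : forall x, 0 < x -> - l <= F x).
  { intros x Hx. destruct (Rle_lt_dec 1 x).
    - pose proof (Hm 1 x ltac:(lra) r). lra.
    - pose proof (RInt_from_1_sub f Hc x 1 Hx ltac:(lra)) as E.
      change (F 1 - F x = RInt f x 1) in E.
      pose proof (Hle x 1 Hx ltac:(lra)). lra. }
  destruct (nondecreasing_bounded_lim_p_infty F l Hm HU) as [L1 HL1].
  destruct (nondecreasing_bounded_lim_at_right_0 F (- l) Hm HD) as [L0 HL0].
  exists (L1 - L0). apply is_improper_RInt_derive with F; auto.
  intros x Hx. apply RInt_from_1_derive; auto.
Qed.

(** * The incomplete Gamma function *)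

Lemma Rpower_gt_0 x p : 0 < Rpower x p.
Proof. apply exp_pos. Qed.

Lemma is_derive_Rpower p s : 0 < s -> is_derive (fun s => Rpower s p) s (p * Rpower s (p - 1)).
Proof. intros Hs. apply is_derive_Reals, derivable_pt_lim_power, Hs. Qed.

Lemma Rpower_continuous p s : 0 < s -> continuous (fun s => Rpower s p) s.
Proof.
  intros Hs. apply (ex_derive_continuous (K := R_AbsRing) (V := R_NormedModule)).
  eexists. now apply is_derive_Rpower.
Qed.

Lemma pow_le_fact_mul_exp (N : nat) s : 0 <= s -> s ^ N <= INR (fact N) * exp s.
Proof.
  intros Hs. assert (Hf : 0 < INR (fact N)) by apply lt_0_INR, lt_O_fact.
  destruct N as [|n].
  - simpl. pose proof (exp_ge_taylor s 0 Hs). simpl in *. lra.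
  - pose proof (exp_ge_taylor s (S n) Hs) as H. rewrite tech5 in H.
    assert (0 <= sum_f_R0 (fun k => s ^ k / INR (fact k)) n).
    { apply cond_pos_sum. intros k. apply Rmult_le_pos; [apply pow_le, Hs|].
      left. apply Rinv_0_lt_compat, lt_0_INR, lt_O_fact. }
    assert (Hq : s ^ S n / INR (fact (S n)) <= exp s) by lra.
    apply Rmult_le_compat_l with (r := INR (fact (S n))) in Hq; [|lra].
    replace (INR (fact (S n)) * (s ^ S n / INR (fact (S n)))) with (s ^ S n) in Hq
      by (field; lra).
    exact Hq.
Qed.

Definition gamma_density (w s : R) : R := Rpower s (w - 1) * exp (- s).

Definition gamma_prim (w x : R) : R := RInt (gamma_density w) 1 x.

Lemma gamma_density_gt_0 w s : 0 < gamma_density w s.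
Proof. apply Rmult_lt_0_compat; [apply Rpower_gt_0 | apply exp_pos]. Qed.

Lemma gamma_density_continuous w s : 0 < s -> continuous (gamma_density w) s.
Proof.
  intros Hs. apply (ex_derive_continuous (K := R_AbsRing) (V := R_NormedModule)).
  apply ex_derive_mult; [eexists; now apply is_derive_Rpower | auto_derive; exact I].
Qed.

Lemma gamma_density_shift v m x : gamma_density (v + m) x = gamma_density v x * Rpower x m.
Proof.
  unfold gamma_density. replace (v + m - 1) with ((v - 1) + m) by ring.
  rewrite Rpower_plus. ring.
Qed.

Lemma gamma_prim_derive w x : 0 < x -> is_derive (gamma_prim w) x (gamma_density w x).
Proof. apply RInt_from_1_derive. intros; now apply gamma_density_continuous. Qed.

Lemma gamma_prim_sub w x y : 0 < x -> 0 < y -> gamma_prim w y - gamma_prim w x = RInt (gamma_density w) x y.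
Proof. apply RInt_from_1_sub. intros; now apply gamma_density_continuous. Qed.

Lemma gamma_prim_1 w : gamma_prim w 1 = 0.
Proof. unfold gamma_prim. rewrite RInt_point. reflexivity. Qed.

Lemma gamma_prim_nondecreasing w x y : 0 < x -> x <= y -> gamma_prim w x <= gamma_prim w y.
Proof.
  apply RInt_from_1_nondecreasing.
  - intros; now apply gamma_density_continuous.
  - intros s _. left. apply gamma_density_gt_0.
Qed.

(* Beyond 1 the density decays like s^-2, whose primitive -1/s is bounded. *)
Lemma gamma_prim_bounded w : exists U, forall x, 0 < x -> gamma_prim w x <= U.
Proof.
  destruct (INR_unbounded (Rabs w + 1)) as [N HN].
  set (B := INR (fact N)). assert (HB : 0 < B) by apply lt_0_INR, lt_O_fact.
  assert (Hdens : forall s, 1 <= s -> gamma_density w s <= B / s ^ 2).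
  { intros s Hs. assert (Hs2 : 0 < s ^ 2) by (apply pow_lt; lra).
    apply Rmult_le_reg_r with (s ^ 2 * exp s); [apply Rmult_lt_0_compat; [exact Hs2 | apply exp_pos]|].
    replace (B / s ^ 2 * (s ^ 2 * exp s)) with (B * exp s) by (field; lra).
    replace (gamma_density w s * (s ^ 2 * exp s)) with (Rpower s (w + 1)).
    2:{ unfold gamma_density. rewrite <- (Rpower_pow 2 s), exp_Ropp by lra.
        replace (w + 1) with ((w - 1) + INR 2) by (simpl; ring).
        rewrite Rpower_plus. field. apply Rgt_not_eq, exp_pos. }
    apply Rle_trans with (s ^ N); [|apply pow_le_fact_mul_exp; lra].
    rewrite <- Rpower_pow by lra. apply Rle_Rpower; [exact Hs|].
    pose proof (Rle_abs w). lra. }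
  exists B. intros x Hx. destruct (Rle_lt_dec x 1).
  - pose proof (gamma_prim_nondecreasing w x 1 Hx r). rewrite gamma_prim_1 in H. lra.
  - assert (HI : RInt (fun s => B / s ^ 2) 1 x = - B / x - - B / 1).
    { apply (RInt_derive_pos _ (fun s => - B / s)); [lra | lra | |].
      - intros s Hs. auto_derive; [lra|]. field. lra.
      - intros s Hs. apply (ex_derive_continuous (K := R_AbsRing) (V := R_NormedModule)).
        auto_derive. apply Rgt_not_eq. nra. }
    apply Rle_trans with (RInt (fun s => B / s ^ 2) 1 x).
    + apply RInt_le; [lra | apply ex_RInt_continuous_pos; try lra | |].
      * intros; now apply gamma_density_continuous.
      * apply (ex_RInt_continuous (V := R_CompleteNormedModule)). intros s [Hs _].
        rewrite Rmin_left in Hs by lra.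
        apply (ex_derive_continuous (K := R_AbsRing) (V := R_NormedModule)).
        auto_derive. apply Rgt_not_eq. nra.
      * intros s Hs. apply Hdens. lra.
    + rewrite HI. assert (0 <= B / x) by (apply Rmult_le_pos; [lra | left; apply Rinv_0_lt_compat, Hx]).
      replace (- B / x - - B / 1) with (B - B / x) by (field; lra). lra.
Qed.

(* Near 0 the density is at most s^(w-1), whose primitive s^w/w is bounded. *)
Lemma gamma_prim_bounded_below w : 0 < w -> forall x, 0 < x -> - / w <= gamma_prim w x.
Proof.
  intros Hw x Hx. assert (0 < / w) by (apply Rinv_0_lt_compat, Hw).
  destruct (Rle_lt_dec 1 x).
  - pose proof (gamma_prim_nondecreasing w 1 x ltac:(lra) r). rewrite gamma_prim_1 in H0. lra.
  - pose proof (gamma_prim_sub w x 1 Hx ltac:(lra)) as E. rewrite gamma_prim_1 in E.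
    assert (HI : RInt (fun s => Rpower s (w - 1)) x 1 = Rpower 1 w / w - Rpower x w / w).
    { apply (RInt_derive_pos _ (fun s => Rpower s w / w)); [exact Hx | lra | |].
      - intros s Hs. apply (is_derive_ext (fun s => / w * Rpower s w)).
        + intros t. unfold Rdiv. apply Rmult_comm.
        + replace (Rpower s (w - 1)) with (/ w * (w * Rpower s (w - 1))) by (field; lra).
          apply is_derive_scal, is_derive_Rpower, Hs.
      - intros; now apply Rpower_continuous. }
    assert (RInt (gamma_density w) x 1 <= RInt (fun s => Rpower s (w - 1)) x 1).
    { apply RInt_le; [lra | apply ex_RInt_continuous_pos; try lra | |].
      - intros; now apply gamma_density_continuous.
      - apply ex_RInt_continuous_pos; [exact Hx | lra |]. intros; now apply Rpower_continuous.
      - intros s Hs. unfold gamma_density. pose proof (Rpower_gt_0 s (w - 1)).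
        assert (exp (- s) <= 1) by (rewrite <- exp_0; left; apply exp_increasing; lra).
        nra. }
    replace (Rpower 1 w) with 1 in HI by (unfold Rpower; rewrite ln_1, Rmult_0_r, exp_0; reflexivity).
    rewrite HI in H0.
    assert (0 <= Rpower x w / w) by (apply Rmult_le_pos; [left; apply Rpower_gt_0 | lra]).
    unfold Rdiv in *. lra.
Qed.

Definition gamma_prim_0 (w : R) : R :=
  epsilon (inhabits 0) (fun L => filterlim (gamma_prim w) (at_right 0) (locally L)).

Definition gamma_prim_oo (w : R) : R :=
  epsilon (inhabits 0) (fun L => filterlim (gamma_prim w) (Rbar_locally p_infty) (locally L)).

Section GammaPrimLimits.
Variable w : R.
Hypothesis w_pos : 0 < w.

Lemma gamma_prim_lim_0 : filterlim (gamma_prim w) (at_right 0) (locally (gamma_prim_0 w)).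
Proof.
  apply (epsilon_spec (inhabits 0) (fun L => filterlim (gamma_prim w) (at_right 0) (locally L))).
  apply (nondecreasing_bounded_lim_at_right_0 _ (- / w)).
  - apply gamma_prim_nondecreasing.
  - now apply gamma_prim_bounded_below.
Qed.

Lemma gamma_prim_lim_oo :
  filterlim (gamma_prim w) (Rbar_locally p_infty) (locally (gamma_prim_oo w)).
Proof.
  apply (epsilon_spec (inhabits 0)
    (fun L => filterlim (gamma_prim w) (Rbar_locally p_infty) (locally L))).
  destruct (gamma_prim_bounded w) as [U HU].
  exact (nondecreasing_bounded_lim_p_infty _ U (gamma_prim_nondecreasing w) HU).
Qed.

Lemma gamma_prim_le_lim_oo x : 0 < x -> gamma_prim w x <= gamma_prim_oo w.
Proof.
  intros Hx. change (Rbar_le (gamma_prim w x) (gamma_prim_oo w)).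
  apply (filterlim_le (F := Rbar_locally p_infty) (fun _ => gamma_prim w x) (gamma_prim w));
    [| apply filterlim_const | apply gamma_prim_lim_oo].
  exists x. intros y Hy. apply gamma_prim_nondecreasing; lra.
Qed.

Lemma is_improper_RInt_gamma_density :
  is_improper_RInt (gamma_density w) (gamma_prim_oo w - gamma_prim_0 w).
Proof.
  apply is_improper_RInt_derive with (gamma_prim w).
  - intros; now apply gamma_prim_derive.
  - intros; now apply gamma_density_continuous.
  - apply gamma_prim_lim_0.
  - apply gamma_prim_lim_oo.
Qed.

Lemma Gamma_eq_lim : Gamma w = gamma_prim_oo w - gamma_prim_0 w.
Proof. apply Int_0_inf_correct, is_improper_RInt_gamma_density. Qed.

Lemma Gamma_gt_0 : 0 < Gamma w.
Proof.
  rewrite Gamma_eq_lim. apply Rlt_le_trans with (RInt (gamma_density w) 1 2).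
  - apply RInt_gt_0; [lra | intros; apply gamma_density_gt_0 |].
    intros; apply gamma_density_continuous; lra.
  - apply (RInt_le_improper (gamma_density w)); [apply is_improper_RInt_gamma_density | | lra | lra].
    intros x _. left. apply gamma_density_gt_0.
Qed.

Lemma Gamma_inc_eq x : 0 < x -> Gamma_inc w x = (gamma_prim w x - gamma_prim_0 w) / Gamma w.
Proof.
  intros Hx. unfold Gamma_inc. fold (gamma_density w).
  rewrite (Int_0_x_correct (gamma_density w) x (gamma_prim w x - gamma_prim_0 w)); [| exact Hx |].
  - unfold Rdiv. ring.
  - apply is_improper_RInt_0_x_derive; [exact Hx | | | apply gamma_prim_lim_0].
    + intros; now apply gamma_prim_derive.
    + intros; now apply gamma_density_continuous.
Qed.

End GammaPrimLimits.

(* On [x, oo) the density of Gamma(v + m) is s^m >= x^m times that of Gamma(v). *)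
Lemma Rpower_mul_gamma_tail_le v m x : 0 < v -> 0 <= m -> 0 < x ->
  Rpower x m * (gamma_prim_oo v - gamma_prim v x) <= gamma_prim_oo (v + m) - gamma_prim (v + m) x.
Proof.
  intros Hv Hm Hx. assert (Hw : 0 < v + m) by lra.
  change (Rbar_le (Rpower x m * (gamma_prim_oo v - gamma_prim v x))
    (gamma_prim_oo (v + m) - gamma_prim (v + m) x)).
  apply (filterlim_le (F := Rbar_locally p_infty)
    (fun y => Rpower x m * (gamma_prim v y - gamma_prim v x))
    (fun y => gamma_prim (v + m) y - gamma_prim (v + m) x)).
  - exists x. intros y Hy. rewrite !gamma_prim_sub by lra.
    rewrite <- (RInt_scal (V := R_CompleteNormedModule))
      by (apply ex_RInt_continuous_pos; try lra; intros; now apply gamma_density_continuous).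
    apply RInt_le; [lra | | |].
    + apply (ex_RInt_scal (V := R_CompleteNormedModule)).
      apply ex_RInt_continuous_pos; try lra. intros; now apply gamma_density_continuous.
    + apply ex_RInt_continuous_pos; try lra. intros; now apply gamma_density_continuous.
    + intros s Hs. change (scal (Rpower x m) (gamma_density v s)) with (Rpower x m * gamma_density v s).
      rewrite gamma_density_shift, Rmult_comm.
      apply Rmult_le_compat_l; [left; apply gamma_density_gt_0|].
      apply Rle_Rpower_l; [exact Hm | lra].
  - apply filterlim_Rmult_l, filterlim_Rminus; [apply gamma_prim_lim_oo | apply filterlim_const].
  - apply (filterlim_Rminus (F := Rbar_locally p_infty)); [apply gamma_prim_lim_oo | apply filterlim_const].
Qed.

(** * The tail 1 - Gamma(v, c / r) and its moments *)

Lemma Rpower_div_l c r m : 0 < c -> 0 < r -> Rpower (c / r) m = Rpower c m * Rpower r (- m).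
Proof.
  intros Hc Hr. unfold Rpower. rewrite ln_div, <- exp_plus by assumption. f_equal. ring.
Qed.

Lemma Rpower_opp_lim_p_infty m : 0 < m ->
  filterlim (fun r => Rpower r (- m)) (Rbar_locally p_infty) (locally 0).
Proof.
  intros Hm. apply filterlim_p_infty_iff. intros eps He. exists (exp (- ln eps / m)).
  intros x Hx. assert (Hx0 : 0 < x) by (pose proof (exp_pos (- ln eps / m)); lra).
  rewrite Rminus_0_r, Rabs_right by (left; apply Rpower_gt_0).
  unfold Rpower. rewrite <- (exp_ln eps) by exact He. apply exp_increasing.
  apply ln_increasing in Hx; [|apply exp_pos]. rewrite ln_exp in Hx.
  apply Rmult_lt_compat_l with (r := m) in Hx; [|exact Hm].
  replace (m * (- ln eps / m)) with (- ln eps) in Hx by (field; lra). lra.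
Qed.

Lemma gamma_prim_comp_div_derive w c r : 0 < c -> 0 < r ->
  is_derive (fun r => gamma_prim w (c / r)) r (gamma_density w (c / r) * (- c / r ^ 2)).
Proof.
  intros Hc Hr. rewrite Rmult_comm.
  apply (is_derive_comp (gamma_prim w) (fun r => c / r)).
  - apply gamma_prim_derive, Rdiv_lt_0_compat; assumption.
  - auto_derive; [lra | field; lra].
Qed.

Section GammaTail.
Variables v c : R.
Hypotheses (v_pos : 0 < v) (c_pos : 0 < c).

Definition gamma_tail (r : R) : R := (gamma_prim_oo v - gamma_prim v (c / r)) / Gamma v.

Lemma gamma_tail_eq r : 0 < r -> 1 - Gamma_inc v (c / r) = gamma_tail r.
Proof.
  intros Hr. pose proof (Gamma_gt_0 v v_pos) as HG.
  rewrite Gamma_inc_eq by (try apply Rdiv_lt_0_compat; assumption).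
  unfold gamma_tail. rewrite (Gamma_eq_lim v v_pos) in HG |- *. field. lra.
Qed.

Lemma gamma_tail_ge_0 r : 0 < r -> 0 <= gamma_tail r.
Proof.
  intros Hr. apply Rmult_le_pos; [|left; apply Rinv_0_lt_compat, Gamma_gt_0, v_pos].
  pose proof (gamma_prim_le_lim_oo v (c / r) ltac:(apply Rdiv_lt_0_compat; assumption)).
  lra.
Qed.

Lemma gamma_tail_derive r : 0 < r ->
  is_derive gamma_tail r (gamma_density v (c / r) * c / r ^ 2 / Gamma v).
Proof.
  intros Hr. pose proof (Gamma_gt_0 v v_pos) as HG.
  apply (is_derive_ext (fun r => / Gamma v * (gamma_prim_oo v - gamma_prim v (c / r)))).
  { intros t. unfold gamma_tail, Rdiv. apply Rmult_comm. }
  replace (gamma_density v (c / r) * c / r ^ 2 / Gamma v)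
    with (/ Gamma v * (0 - gamma_density v (c / r) * (- c / r ^ 2))) by (field; lra).
  apply is_derive_scal, (is_derive_minus (fun _ => gamma_prim_oo v) (fun r => gamma_prim v (c / r))).
  - apply (is_derive_const (K := R_AbsRing) (V := R_NormedModule)).
  - now apply gamma_prim_comp_div_derive.
Qed.

Lemma gamma_tail_lim_p_infty : filterlim gamma_tail (Rbar_locally p_infty) (locally 1).
Proof.
  pose proof (Gamma_gt_0 v v_pos) as HG.
  replace 1 with (/ Gamma v * (gamma_prim_oo v - gamma_prim_0 v))
    by (rewrite <- Gamma_eq_lim by exact v_pos; field; lra).
  apply (filterlim_ext (fun r => / Gamma v * (gamma_prim_oo v - gamma_prim v (c / r)))).
  { intros t. unfold gamma_tail, Rdiv. apply Rmult_comm. }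
  apply filterlim_Rmult_l, filterlim_Rminus; [apply filterlim_const|].
  apply filterlim_comp_div_p_infty; [exact c_pos|]. apply gamma_prim_lim_0, v_pos.
Qed.

Section Moment.
Variable m : R.
Hypothesis m_pos : 0 < m.

(* Integration by parts against r^(-m-1), followed by the substitution u = c / r. *)
Definition gamma_tail_moment_prim (r : R) : R :=
  / m * ((-1) * (gamma_tail r * Rpower r (- m))
         - Rpower c (- m) / Gamma v * gamma_prim (v + m) (c / r)).

Lemma gamma_tail_moment_prim_derive r : 0 < r ->
  is_derive gamma_tail_moment_prim r (gamma_tail r * Rpower r (- m - 1)).
Proof.
  intros Hr. pose proof (Gamma_gt_0 v v_pos) as HG.
  assert (HP := is_derive_mult gamma_tail (fun s => Rpower s (- m)) r _ _
    (gamma_tail_derive r Hr) (is_derive_Rpower (- m) r Hr) Rmult_comm).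
  assert (HS := is_derive_scal _ r (/ m) _ (is_derive_minus _ _ r _ _
    (is_derive_scal _ r (-1) _ HP)
    (is_derive_scal _ r (Rpower c (- m) / Gamma v) _
       (gamma_prim_comp_div_derive (v + m) c r c_pos Hr)))).
  match type of HS with is_derive _ _ ?D =>
    replace (gamma_tail r * Rpower r (- m - 1)) with D; [exact HS|] end.
  unfold scal, minus, plus, opp, mult; simpl.
  assert (E1 : Rpower r (- m) = Rpower r (- m - 1) * r).
  { replace (- m) with ((- m - 1) + 1) at 1 by ring. rewrite Rpower_plus, Rpower_1 by exact Hr.
    reflexivity. }
  rewrite gamma_density_shift, Rpower_div_l, E1, (Rpower_Ropp c) by assumption.
  pose proof (Rpower_gt_0 c m). field. repeat split; lra.
Qed.

Lemma gamma_tail_mul_Rpower_lim_0 :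
  filterlim (fun r => gamma_tail r * Rpower r (- m)) (at_right 0) (locally 0).
Proof.
  assert (Hw : 0 < v + m) by lra. pose proof (Gamma_gt_0 v v_pos) as HG.
  set (K := Rpower c (- m) / Gamma v).
  assert (HK : 0 < K) by (apply Rdiv_lt_0_compat; [apply Rpower_gt_0 | exact HG]).
  apply (filterlim_le_le (fun _ => 0) _
    (fun r => K * (gamma_prim_oo (v + m) - gamma_prim (v + m) (c / r))) (Finite 0)).
  - exists (mkposreal 1 Rlt_0_1). intros r _ Hr. split.
    + apply Rmult_le_pos; [now apply gamma_tail_ge_0 | left; apply Rpower_gt_0].
    + assert (Hx : 0 < c / r) by (apply Rdiv_lt_0_compat; assumption).
      pose proof (Rpower_mul_gamma_tail_le v m (c / r) v_pos ltac:(lra) Hx) as Ht.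
      rewrite Rpower_div_l in Ht by assumption.
      replace (gamma_tail r * Rpower r (- m)) with
        (K * (Rpower c m * Rpower r (- m) * (gamma_prim_oo v - gamma_prim v (c / r)))).
      * apply Rmult_le_compat_l; [lra | exact Ht].
      * unfold K, gamma_tail. rewrite Rpower_Ropp. pose proof (Rpower_gt_0 c m). field. lra.
  - apply filterlim_const.
  - replace (Finite 0) with (Finite (K * (gamma_prim_oo (v + m) - gamma_prim_oo (v + m))))
      by (f_equal; ring).
    apply filterlim_Rmult_l, filterlim_Rminus; [apply filterlim_const|].
    apply filterlim_comp_div_at_right_0; [exact c_pos|]. apply gamma_prim_lim_oo.
Qed.

Lemma is_improper_RInt_gamma_tail_moment :
  is_improper_RInt (fun r => gamma_tail r * Rpower r (- m - 1))
    (Rpower c (- m) * Gamma (v + m) / (m * Gamma v)).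
Proof.
  assert (Hw : 0 < v + m) by lra. pose proof (Gamma_gt_0 v v_pos) as HG.
  set (K := Rpower c (- m) / Gamma v).
  replace (Rpower c (- m) * Gamma (v + m) / (m * Gamma v)) with
    (/ m * ((-1) * 0 - K * gamma_prim_0 (v + m)) - / m * ((-1) * 0 - K * gamma_prim_oo (v + m)))
    by (rewrite Gamma_eq_lim by exact Hw; unfold K; field; lra).
  apply is_improper_RInt_derive with gamma_tail_moment_prim.
  - exact gamma_tail_moment_prim_derive.
  - intros r Hr. apply (ex_derive_continuous (K := R_AbsRing) (V := R_NormedModule)).
    apply ex_derive_mult; [eexists; now apply gamma_tail_derive|].
    eexists. now apply is_derive_Rpower.
  - apply filterlim_Rmult_l, filterlim_Rminus.
    + apply filterlim_Rmult_l, gamma_tail_mul_Rpower_lim_0.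
    + apply filterlim_Rmult_l, filterlim_comp_div_at_right_0; [exact c_pos|].
      apply gamma_prim_lim_oo.
  - apply filterlim_Rmult_l, filterlim_Rminus.
    + apply filterlim_Rmult_l. replace 0 with (1 * 0) by ring.
      apply filterlim_Rmult; [exact gamma_tail_lim_p_infty | now apply Rpower_opp_lim_p_infty].
    + apply filterlim_Rmult_l, filterlim_comp_div_p_infty; [exact c_pos|].
      apply gamma_prim_lim_0; exact Hw.
Qed.

End Moment.
End GammaTail.

(** * Expansion of P_inf *)

Lemma is_derive_n_exp_opp k t : is_derive_n (fun y => exp (- y)) k t ((-1) ^ k * exp (- t)).
Proof.
  apply is_derive_n_comp_opp; [|apply is_derive_n_exp].
  exists (mkposreal 1 Rlt_0_1). intros y _ j _. destruct j; [exact I|].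
  eexists. apply (is_derive_n_exp (S j) y).
Qed.

(* Lagrange remainder; every derivative of exp (- y) is bounded by 1 on [0, x]. *)
Lemma exp_opp_taylor_remainder_le n x : 0 <= x ->
  Rabs (exp (- x) - sum_f_R0 (fun k => / INR (fact k) * (- x) ^ k) n)
    <= x ^ S n / INR (fact (S n)).
Proof.
  intros [Hx | <-].
  - destruct (Taylor_Lagrange (fun y => exp (- y)) n 0 x Hx) as [z [Hz E]].
    { intros t _ k _. destruct k; [exact I|]. eexists. apply (is_derive_n_exp_opp (S k) t). }
    rewrite E, (is_derive_n_unique _ _ _ _ (is_derive_n_exp_opp (S n) z)).
    replace (sum_f_R0 (fun k => (x - 0) ^ k / INR (fact k) * Derive_n (fun y => exp (- y)) k 0) n)
      with (sum_f_R0 (fun k => / INR (fact k) * (- x) ^ k) n).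
    2:{ apply sum_eq. intros i _. rewrite (is_derive_n_unique _ _ _ _ (is_derive_n_exp_opp i 0)).
        rewrite Ropp_0, exp_0, Rminus_0_r. replace (- x) with ((-1) * x) by ring.
        rewrite Rpow_mult_distr. unfold Rdiv. ring. }
    match goal with |- Rabs (?A + ?B - ?A) <= _ => replace (A + B - A) with B by ring end.
    assert (Hf : 0 < / INR (fact (S n))) by apply Rinv_0_lt_compat, lt_0_INR, lt_O_fact.
    assert (exp (- z) <= 1) by (rewrite <- exp_0; left; apply exp_increasing; lra).
    rewrite Rminus_0_r, !Rabs_mult, pow_1_abs, Rmult_1_l, (Rabs_right (exp (- z)))
      by (left; apply exp_pos).
    rewrite Rabs_right by (apply Rle_ge, Rmult_le_pos; [apply pow_le; lra | lra]).
    assert (0 <= x ^ S n * / INR (fact (S n))) by (apply Rmult_le_pos; [apply pow_le | ]; lra).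
    unfold Rdiv. nra.
  - rewrite Ropp_0, exp_0.
    replace (sum_f_R0 (fun k => / INR (fact k) * 0 ^ k) n) with 1.
    + rewrite Rminus_eq_0, Rabs_R0. simpl. unfold Rdiv. rewrite !Rmult_0_l. lra.
    + induction n as [|n IH]; [simpl; field|]. rewrite tech5, <- IH. simpl. ring.
Qed.

Lemma Rpower_opp_half_sub_1 r k : 0 < r ->
  Rpower r (- (INR k + 1 / 2) - 1) = (/ r) ^ k * Rpower r (- (3 / 2)).
Proof.
  intros Hr. replace (- (INR k + 1 / 2) - 1) with (- INR k + - (3 / 2)) by field.
  rewrite Rpower_plus, Rpower_Ropp, Rpower_pow, pow_inv by exact Hr. reflexivity.
Qed.

Section Expansion.
Variables x0 y0 nu beta : R.
Hypotheses (hy0 : 0 < y0) (hnu : 0 < nu) (hb1 : beta < 1).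

Definition shape : R := 1 / (2 * (1 - beta)).
Definition scale : R := Rpower x0 (2 * (1 - beta)) / (2 * (1 - beta) ^ 2).
Definition rate : R := y0 ^ 2 / (2 * nu ^ 2).
Definition prefactor : R := y0 / (nu * sqrt (2 * PI)).
Definition moment_order (k : nat) : R := INR k + 1 / 2.

Definition tail_moment_term (k : nat) (r : R) : R :=
  gamma_tail shape scale r * Rpower r (- moment_order k - 1).

Definition tail_moment (k : nat) : R :=
  Rpower scale (- moment_order k) * Gamma (shape + moment_order k)
  / (moment_order k * Gamma shape).

Lemma shape_pos : 0 < shape.
Proof. unfold shape. apply Rdiv_lt_0_compat; lra. Qed.

Lemma scale_pos : 0 < scale.
Proof.
  unfold scale. apply Rdiv_lt_0_compat; [apply Rpower_gt_0|].
  assert (0 < (1 - beta) ^ 2) by (apply pow_lt; lra). lra.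
Qed.

Lemma rate_pos : 0 < rate.
Proof.
  unfold rate. apply Rdiv_lt_0_compat; [apply pow_lt, hy0|].
  apply Rmult_lt_0_compat; [lra | apply pow_lt, hnu].
Qed.

Lemma prefactor_pos : 0 < prefactor.
Proof.
  unfold prefactor. apply Rdiv_lt_0_compat, Rmult_lt_0_compat; try assumption.
  apply sqrt_lt_R0. pose proof PI_RGT_0. lra.
Qed.

Lemma moment_order_pos k : 0 < moment_order k.
Proof. unfold moment_order. pose proof (pos_INR k). lra. Qed.

Lemma is_improper_RInt_tail_moment k : is_improper_RInt (tail_moment_term k) (tail_moment k).
Proof.
  apply is_improper_RInt_gamma_tail_moment;
    [apply shape_pos | apply scale_pos | apply moment_order_pos].
Qed.

Lemma tail_moment_term_ge_0 k r : 0 < r -> 0 <= tail_moment_term k r.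
Proof.
  intros Hr. apply Rmult_le_pos; [|left; apply Rpower_gt_0].
  apply gamma_tail_ge_0; [apply shape_pos | apply scale_pos | exact Hr].
Qed.

Lemma tail_factor_eq r : 0 < r -> tail_factor x0 beta r = gamma_tail shape scale r.
Proof.
  intros Hr. unfold tail_factor.
  replace (Rpower x0 (2 * (1 - beta)) / (2 * r * (1 - beta) ^ 2)) with (scale / r)
    by (unfold scale; field; lra).
  apply gamma_tail_eq; [apply shape_pos | apply scale_pos | exact Hr].
Qed.

Lemma P_n_integrand_eq n r : 0 < r -> P_n_integrand x0 y0 nu beta n r =
  sum_f_R0 (fun k => prefactor * (- rate) ^ k / INR (fact k) * tail_moment_term k r) n.
Proof.
  intros Hr. unfold P_n_integrand, tail_moment_term, moment_order.
  rewrite tail_factor_eq, scal_sum by exact Hr. apply sum_eq. intros k _.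
  rewrite Rpower_opp_half_sub_1 by exact Hr.
  replace (- (y0 ^ 2 / (2 * nu ^ 2 * r))) with (- rate * / r) by (unfold rate; field; lra).
  rewrite Rpow_mult_distr. unfold prefactor. rewrite Rpower_Ropp.
  pose proof (Rpower_gt_0 r (3 / 2)).
  assert (0 < sqrt (2 * PI)) by (apply sqrt_lt_R0; pose proof PI_RGT_0; lra).
  assert (0 < INR (fact k)) by apply lt_0_INR, lt_O_fact.
  field. repeat split; lra.
Qed.

Lemma is_improper_RInt_P_n n : is_improper_RInt (P_n_integrand x0 y0 nu beta n)
  (sum_f_R0 (fun k => prefactor * (- rate) ^ k / INR (fact k) * tail_moment k) n).
Proof.
  apply is_improper_RInt_ext with
    (fun r => sum_f_R0 (fun k => prefactor * (- rate) ^ k / INR (fact k) * tail_moment_term k r) n).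
  { intros r Hr. symmetry. now apply P_n_integrand_eq. }
  apply (is_improper_RInt_sum
    (fun k r => prefactor * (- rate) ^ k / INR (fact k) * tail_moment_term k r)).
  intros k. apply is_improper_RInt_scal, is_improper_RInt_tail_moment.
Qed.

Lemma sqrt_scale : sqrt scale = Rpower x0 (1 - beta) / (sqrt 2 * (1 - beta)).
Proof.
  assert (Hp := Rpower_gt_0 x0 (1 - beta)).
  assert (Hs2 : sqrt 2 * sqrt 2 = 2) by (apply sqrt_sqrt; lra).
  assert (0 < sqrt 2) by (apply sqrt_lt_R0; lra).
  rewrite <- (sqrt_square (Rpower x0 (1 - beta) / (sqrt 2 * (1 - beta))))
    by (left; apply Rdiv_lt_0_compat; [exact Hp | apply Rmult_lt_0_compat; lra]).
  f_equal. unfold scale.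
  replace (2 * (1 - beta)) with ((1 - beta) + (1 - beta)) by ring. rewrite Rpower_plus.
  replace (2 * (1 - beta) ^ 2) with ((sqrt 2 * sqrt 2) * (1 - beta) ^ 2) by (rewrite Hs2; ring).
  field. lra.
Qed.

Lemma tail_moment_coef_eq k :
  prefactor * rate ^ k / INR (fact k) * tail_moment k = b_coef x0 y0 nu beta k.
Proof.
  unfold tail_moment, b_coef. fold shape.
  replace (shape + moment_order k) with (INR k + 1 + beta / (2 - 2 * beta))
    by (unfold shape, moment_order; field; lra).
  assert (Hc := scale_pos). assert (Hp := Rpower_gt_0 x0 (1 - beta)).
  assert (Hs2 : 0 < sqrt 2) by (apply sqrt_lt_R0; lra).
  assert (HsP : 0 < sqrt PI) by apply sqrt_lt_R0, PI_RGT_0.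
  assert (Hg := Gamma_gt_0 shape shape_pos).
  assert (Hf : 0 < INR (fact k)) by apply lt_0_INR, lt_O_fact.
  assert (Hk := pos_INR k). assert (0 < scale ^ k) by (apply pow_lt, Hc).
  unfold moment_order. replace (- (INR k + 1 / 2)) with (- INR k + - (/ 2)) by field.
  rewrite Rpower_plus, Rpower_Ropp, Rpower_pow, (Rpower_Ropp scale), Rpower_sqrt, sqrt_scale
    by exact Hc.
  replace (rate ^ k) with
    ((y0 ^ 2 * (1 - beta) ^ 2 / (nu ^ 2 * Rpower x0 (2 * (1 - beta)))) ^ k * scale ^ k).
  2:{ rewrite <- Rpow_mult_distr. f_equal. unfold scale, rate. field.
      repeat split; try lra. apply Rgt_not_eq, Rpower_gt_0. }
  unfold prefactor. rewrite sqrt_mult by (try lra; left; apply PI_RGT_0).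
  field. repeat split; lra.
Qed.

Lemma tail_moment_coef_alt_eq k :
  prefactor * (- rate) ^ k / INR (fact k) * tail_moment k = (-1) ^ k * b_coef x0 y0 nu beta k.
Proof.
  rewrite <- tail_moment_coef_eq. replace (- rate) with ((-1) * rate) by ring.
  rewrite Rpow_mult_distr. unfold Rdiv. ring.
Qed.

Lemma P_inf_integrand_eq r : 0 < r -> P_inf_integrand x0 y0 nu beta r =
  prefactor * tail_moment_term 0 r * exp (- (rate / r)).
Proof.
  intros Hr. unfold P_inf_integrand, tail_moment_term, moment_order.
  rewrite tail_factor_eq by exact Hr. simpl INR.
  replace (- (0 + 1 / 2) - 1) with (- (3 / 2)) by field.
  replace (rate / r) with (y0 ^ 2 / (2 * nu ^ 2 * r)) by (unfold rate; field; lra).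
  unfold prefactor. ring.
Qed.

Lemma P_inf_integrable : exists l, is_improper_RInt (P_inf_integrand x0 y0 nu beta) l.
Proof.
  set (f := fun r => prefactor * tail_moment_term 0 r * exp (- (rate / r))).
  destruct (is_improper_RInt_le_ex f (fun r => prefactor * tail_moment_term 0 r)
    (prefactor * tail_moment 0)) as [l Hl].
  - intros r Hr. apply (ex_derive_continuous (K := R_AbsRing) (V := R_NormedModule)).
    unfold f, tail_moment_term. apply ex_derive_mult; [apply ex_derive_mult|].
    + apply ex_derive_const.
    + apply ex_derive_mult; [eexists; apply gamma_tail_derive|];
        [apply shape_pos | apply scale_pos | exact Hr |].
      eexists. now apply is_derive_Rpower.
    + auto_derive. lra.
  - intros r Hr. pose proof (tail_moment_term_ge_0 0 r Hr). pose proof prefactor_pos.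
    assert (exp (- (rate / r)) <= 1).
    { assert (0 < rate / r) by (apply Rdiv_lt_0_compat; [apply rate_pos | exact Hr]).
      rewrite <- exp_0. left. apply exp_increasing. lra. }
    assert (0 <= prefactor * tail_moment_term 0 r) by (apply Rmult_le_pos; lra).
    pose proof (exp_pos (- (rate / r))). unfold f. split; nra.
  - apply is_improper_RInt_scal, is_improper_RInt_tail_moment.
  - exists l. apply is_improper_RInt_ext with f; [|exact Hl].
    intros r Hr. symmetry. now apply P_inf_integrand_eq.
Qed.

Lemma P_inf_P_n_integrand_diff_le n r : 0 < r ->
  Rabs (P_inf_integrand x0 y0 nu beta r - P_n_integrand x0 y0 nu beta n r) <=
  prefactor * rate ^ S n / INR (fact (S n)) * tail_moment_term (S n) r.
Proof.
  intros Hr. rewrite P_inf_integrand_eq by exact Hr. unfold P_n_integrand.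
  rewrite tail_factor_eq by exact Hr.
  assert (Hx : 0 < rate / r) by (apply Rdiv_lt_0_compat; [apply rate_pos | exact Hr]).
  set (T := tail_moment_term 0 r). assert (HT : 0 <= T) by apply tail_moment_term_ge_0, Hr.
  replace (gamma_tail shape scale r * (y0 / (nu * Rpower r (3 / 2) * sqrt (2 * PI))))
    with (prefactor * T).
  2:{ unfold T, tail_moment_term, moment_order, prefactor. simpl INR.
      replace (- (0 + 1 / 2) - 1) with (- (3 / 2)) by field. rewrite Rpower_Ropp.
      pose proof (Rpower_gt_0 r (3 / 2)).
      assert (0 < sqrt (2 * PI)) by (apply sqrt_lt_R0; pose proof PI_RGT_0; lra).
      field. repeat split; lra. }
  replace (- (y0 ^ 2 / (2 * nu ^ 2 * r))) with (- (rate / r)) by (unfold rate; field; lra).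
  replace (prefactor * T * exp (- (rate / r))
    - prefactor * T * sum_f_R0 (fun k => / INR (fact k) * (- (rate / r)) ^ k) n)
    with (prefactor * T * (exp (- (rate / r)) - sum_f_R0 (fun k => / INR (fact k) * (- (rate / r)) ^ k) n))
    by ring.
  pose proof prefactor_pos.
  rewrite Rabs_mult, (Rabs_right (prefactor * T)) by (apply Rle_ge, Rmult_le_pos; lra).
  eapply Rle_trans; [apply Rmult_le_compat_l; [apply Rmult_le_pos; lra|];
    apply exp_opp_taylor_remainder_le; lra|].
  right. unfold T, tail_moment_term, moment_order.
  rewrite !Rpower_opp_half_sub_1 by exact Hr. unfold Rdiv. rewrite Rpow_mult_distr. simpl. ring.
Qed.

Lemma P_inf_correct : is_improper_RInt (P_inf_integrand x0 y0 nu beta) (P_inf x0 y0 nu beta).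
Proof.
  destruct P_inf_integrable as [l Hl].
  unfold P_inf. rewrite (Int_0_inf_correct _ l Hl). exact Hl.
Qed.

Lemma P_n_eq_sum n : P_n x0 y0 nu beta n =
  sum_f_R0 (fun k => prefactor * (- rate) ^ k / INR (fact k) * tail_moment k) n.
Proof. apply Int_0_inf_correct, is_improper_RInt_P_n. Qed.

Lemma P_n_correct n : is_improper_RInt (P_n_integrand x0 y0 nu beta n) (P_n x0 y0 nu beta n).
Proof. rewrite P_n_eq_sum. apply is_improper_RInt_P_n. Qed.

Lemma P_n_eq_alternating_sum n :
  P_n x0 y0 nu beta n = sum_f_R0 (fun k => (-1) ^ k * b_coef x0 y0 nu beta k) n.
Proof. rewrite P_n_eq_sum. apply sum_eq. intros k _. apply tail_moment_coef_alt_eq. Qed.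

Lemma P_inf_sub_P_n_le n :
  Rabs (P_inf x0 y0 nu beta - P_n x0 y0 nu beta n) <= b_coef x0 y0 nu beta (S n).
Proof.
  rewrite <- tail_moment_coef_eq.
  apply (is_improper_RInt_Rabs_le _ _ _ _ _ _ P_inf_correct (P_n_correct n)
    (is_improper_RInt_scal _ _ _ (is_improper_RInt_tail_moment (S n)))).
  apply P_inf_P_n_integrand_diff_le.
Qed.

Lemma P_0_eq : P_n x0 y0 nu beta 0 =
  2 * Gamma (1 + beta / (2 - 2 * beta)) / Gamma (1 / (2 - 2 * beta))
  * (y0 * (1 - beta) / (nu * sqrt PI * Rpower x0 (1 - beta))).
Proof.
  rewrite P_n_eq_alternating_sum. simpl sum_f_R0. unfold b_coef. simpl INR.
  replace (1 / (2 * (1 - beta))) with (1 / (2 - 2 * beta)) by (field; lra).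
  replace (0 + 1 + beta / (2 - 2 * beta)) with (1 + beta / (2 - 2 * beta)) by ring.
  assert (Hg : 0 < Gamma (1 / (2 - 2 * beta))).
  { replace (1 / (2 - 2 * beta)) with shape by (unfold shape; field; lra).
    apply Gamma_gt_0, shape_pos. }
  pose proof (Rpower_gt_0 x0 (1 - beta)). assert (0 < sqrt PI) by apply sqrt_lt_R0, PI_RGT_0.
  simpl. field. repeat split; lra.
Qed.

End Expansion.

Theorem mainTheorem7 (x0 y0 nu beta : R)
  (hx0 : 0 < x0) (hy0 : 0 < y0) (hnu : 0 < nu)
  (hb0 : 0 <= beta) (hb1 : beta < 1) :
  improper_integral_0_inf (P_inf_integrand x0 y0 nu beta) (P_inf x0 y0 nu beta) /\
  (forall n : nat,
     improper_integral_0_inf (P_n_integrand x0 y0 nu beta n) (P_n x0 y0 nu beta n) /\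
     P_n x0 y0 nu beta n = sum_f_R0 (fun k => (-1) ^ k * b_coef x0 y0 nu beta k) n /\
     Rabs (P_inf x0 y0 nu beta - P_n x0 y0 nu beta n) <= b_coef x0 y0 nu beta (S n)) /\
  P_n x0 y0 nu beta 0 =
    2 * Gamma (1 + beta / (2 - 2 * beta)) / Gamma (1 / (2 - 2 * beta))
    * (y0 * (1 - beta) / (nu * sqrt PI * Rpower x0 (1 - beta))).
Proof.
  split; [|split].
  - apply improper_integral_0_inf_iff, P_inf_correct; assumption.
  - intros n. split; [|split].
    + apply improper_integral_0_inf_iff, P_n_correct; assumption.
    + apply P_n_eq_alternating_sum; assumption.
    + apply P_inf_sub_P_n_le; assumption.
  - apply P_0_eq; assumption.
Qed.
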